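(* Let $s\ge2$ and let $G$ be a $K_{2,s}$-free graph. Then $G$ is strongly $d$-degenerate, where $d=d(G):=\lfloor 2s\,\nabla_1(G)\rfloor$.
   Context: A graph $H$ is a shallow minor of $G$ at depth $r$ (integer $r\ge0$) if there are disjoint sets $V_1,\dots,V_p\subseteq V(G)$ such that each $G[V_i]$ contains a vertex $x_i$ with every vertex of $V_i$ at distance at most $r$ from $x_i$ in $G[V_i]$, and $H$ is (isomorphic to) a subgraph of the graph obtained by contracting each $V_i$ to a single vertex (two contracted vertices adjacent iff some edge joins the corresponding sets). $\nabla_r(G)$ is the maximum of $e(H)/v(H)$ over all non-empty shallow minors $H$ of $G$ at depth $r$. A graph is $K_{2,s}$-free if it has no subgraph isomorphic to $K_{2,s}$. For an integer $d\ge1$, a vertex $v$ of $G$ is $d$-removable in $G$ if $d_G(v)\le d$ and at most one neighbour $w$ of $v$ has $d_G(w)>d$; $G$ is strongly $d$-degenerate if every non-empty subgraph $G'$ of $G$ contains a vertex $d$-removable in $G'$. *)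

From HB Require Import structures.
From mathcomp Require Import all_boot all_order all_algebra.
Set Implicit Arguments. Unset Strict Implicit. Unset Printing Implicit Defensive.
Import Order.TTheory GRing.Theory Num.Theory.

Definition simple_graph (T : finType) (e : rel T) : Prop :=
  symmetric e /\ irreflexive e.

Definition nverts (T : finType) : nat := #|T|.
Definition edge_set (T : finType) (e : rel T) : {set {set T}} :=
  [set E : {set T} | [exists u, exists v, e u v && (E == [set u; v])]].
Definition nedges (T : finType) (e : rel T) : nat := #|edge_set e|.

Fixpoint reach_in (T : finType) (e : rel T) (V : {set T}) (k : nat) (x y : T)
  : bool :=
  match k with
  | 0 => (x == y)
  | k'.+1 => (x == y) || [exists z in V, e x z && reach_in e V k' z y]
  end.

Definition radius_le (T : finType) (e : rel T) (V : {set T}) (x : T) (r : nat)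
  : bool :=
  (x \in V) && [forall y in V, reach_in e V r x y].

(* H = (TH, eH) is (isomorphic to) a subgraph of a depth-r contraction of
   G = (T, e): the vertex u of H is mapped to the branch set branch u
   (so distinct vertices of H go to distinct, disjoint branch sets), and
   every edge of H is realised by an edge of G between the branch sets. *)
Definition shallow_minor (r : nat) (T : finType) (e : rel T)
    (TH : finType) (eH : rel TH) : Prop :=
  simple_graph eH /\
  exists branch : TH -> {set T},
    (forall u v, u != v -> [disjoint branch u & branch v]) /\
    (forall u, exists x, radius_le e (branch u) x r) /\
    (forall u v, eH u v ->
       exists x y, [/\ x \in branch u, y \in branch v & e x y]).

Definition is_nabla (r : nat) (T : finType) (e : rel T) (q : rat) : Prop :=
  (exists (TH : finType) (eH : rel TH),
      [/\ shallow_minor r e eH, 0 < #|TH|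
        & q = ((nedges eH)%:R / (nverts TH)%:R)%R]) /\
  (forall (TH : finType) (eH : rel TH),
      shallow_minor r e eH -> (0 < #|TH|)%N ->
      ((nedges eH)%:R / (nverts TH)%:R <= q)%R).

Definition has_K2s (s : nat) (T : finType) (e : rel T) : Prop :=
  exists (a b : T) (B : {set T}),
    [/\ a != b, a \notin B, b \notin B, #|B| = s
      & forall w, w \in B -> e a w /\ e b w].

Definition K2s_free (s : nat) (T : finType) (e : rel T) : Prop :=
  ~ has_K2s s e.

Definition subgraph (T : finType) (e : rel T) (S : {set T}) (e' : rel T)
  : Prop :=
  symmetric e' /\
  (forall x y, e' x y -> [&& e x y, x \in S & y \in S]).

Definition deg_in (T : finType) (S : {set T}) (e' : rel T) (v : T) : nat :=
  #|[set w in S | e' v w]|.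

Definition removable (d : nat) (T : finType) (S : {set T}) (e' : rel T)
    (v : T) : bool :=
  [&& v \in S, deg_in S e' v <= d &
      #|[set w in S | e' v w && (d < deg_in S e' w)]| <= 1].

Definition strongly_degenerate (d : nat) (T : finType) (e : rel T) : Prop :=
  forall (S : {set T}) (e' : rel T), subgraph e S e' -> S != set0 ->
    exists v, removable d S e' v.

From HB Require Import structures.
From mathcomp Require Import all_boot all_order all_algebra.
From mathcomp Require Import zify lra.
Import Order.TTheory GRing.Theory Num.Theory.

Set Implicit Arguments.
Unset Strict Implicit.
Unset Printing Implicit Defensive.

(* Suppose a nonempty subgraph G' of G has no d-removable vertex.  Call a vertex
   of G' high if its degree exceeds d and low otherwise; every low vertex then
   has at least two high neighbours.  Attach each low vertex to one of them, its
   anchor: the stars of the high vertices are disjoint and have radius 1, so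
   contracting them yields a depth-1 minor H on the high vertices.  Each low
   vertex sends at least half of its edges into the high vertices to high
   vertices other than its anchor.  For distinct high vertices x and y, the edge
   xy and the low vertices anchored at x and adjacent to y, or vice versa, are
   at most 1 + (s - 1) = s in number, because those low vertices are common
   neighbours of x and y; and there are none unless xy is an edge of H.  Hence
   (d + 1) |H| <= sum of the high degrees <= 2 s e(H) <= 2 s nabla_1(G) |H|,
   contradicting d = floor (2 s nabla_1(G)). *)

Lemma card_set_in_sum (T : finType) (A : {pred T}) (P : pred T) :
  #|[set x in A | P x]| = \sum_(x in A) (P x : nat).
Proof.
rewrite -sum1dep_card big_mkcondr /=.
by apply: eq_bigr => x _; case: (P x).
Qed.

Lemma card_common_nbrs_lt (s : nat) (T : finType) (e : rel T) (x y : T) :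
  irreflexive e -> K2s_free s e -> x != y -> #|[set v | e x v && e y v]| < s.
Proof.
move=> e_irr K2 xy; rewrite ltnNge; apply/negP => /card_geqP [B [B_uniq B_size B_sub]].
apply: K2; exists x, y, [set v in B]; split=> //.
- by apply/negP; rewrite inE => /B_sub; rewrite inE e_irr.
- by apply/negP; rewrite inE => /B_sub; rewrite inE e_irr andbF.
- by rewrite cardsE -B_size; apply/card_uniqP.
- by move=> w; rewrite inE => /B_sub; rewrite inE => /andP.
Qed.

Lemma sum_adj_le_nedges (T : finType) (e : rel T) :
  simple_graph e -> \sum_u \sum_v (e u v : nat) <= 2 * nedges e.
Proof.
move=> [e_sym e_irr]; rewrite pair_big /=.
have -> : \sum_(p : T * T) (e p.1 p.2 : nat) = \sum_(p | e p.1 p.2) 1.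
  by rewrite [RHS]big_mkcond; apply: eq_bigr => p _; case: (e _ _).
rewrite (partition_big (fun p : T * T => [set p.1; p.2]) (mem (edge_set e))) /=;
  last first.
  move=> [u v] /= uv; rewrite inE.
  by apply/existsP; exists u; apply/existsP; exists v; rewrite uv eqxx.
rewrite mulnC -sum_nat_const; apply: leq_sum => E _.
case: (pickP [pred p : T * T | e p.1 p.2 & [set p.1; p.2] == E]);
  last by move=> none; rewrite big_pred0.
move=> [u v] /andP [/= uv /eqP <-].
have vu : v != u by apply: contraTneq uv => ->; rewrite e_irr.
(* The only ordered pairs representing the edge {u, v} are (u, v) and (v, u). *)
rewrite sum1_card (leq_trans (subset_leq_card (B := [set (u, v); (v, u)]) _)) //;
  last by rewrite cards2 ltnS leq_b1.
apply/subsetP => -[x y]; rewrite inE /= => /andP [_ /eqP /setP xyE].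
have /andP [xE yE] : (x \in [set u; v]) && (y \in [set u; v]).
  by rewrite -!xyE !inE !eqxx orbT.
have : (u \in [set x; y]) && (v \in [set x; y]) by rewrite !xyE !inE !eqxx orbT.
move: xE yE; rewrite !inE => /orP [] /eqP -> /orP [] /eqP ->;
  by rewrite ?eqxx ?orbT //= ?orbb ?andbT => /eqP eq_uv; move: vu; rewrite eq_uv eqxx.
Qed.

Definition contraction (TH T : finType) (e : rel T) (branch : TH -> {set T}) : rel TH :=
  fun u w => (u != w) && [exists x in branch u, exists y in branch w, e x y].

Lemma contraction_edge (TH T : finType) (e : rel T) (branch : TH -> {set T})
    (u w : TH) (x y : T) :
  u != w -> x \in branch u -> y \in branch w -> e x y -> contraction e branch u w.
Proof.
by move=> uw xu yw exy; rewrite /contraction uw; apply/exists_inP; exists x => //;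
  apply/exists_inP; exists y.
Qed.

Lemma contraction_shallow_minor (r : nat) (TH T : finType) (e : rel T)
    (branch : TH -> {set T}) :
  symmetric e ->
  (forall u w, u != w -> [disjoint branch u & branch w]) ->
  (forall u, exists x, radius_le e (branch u) x r) ->
  shallow_minor r e (contraction e branch).
Proof.
move=> e_sym branch_disj branch_rad; split.
  split=> [u w|u]; last by rewrite /contraction eqxx.
  rewrite /contraction eq_sym; congr (_ && _).
  by apply/exists_inP/exists_inP=> -[x xu /exists_inP [y yw exy]];
    exists y => //; apply/exists_inP; exists x; rewrite // e_sym.
exists branch; do 2!split=> //.
by move=> u w /andP [_ /exists_inP [x xu /exists_inP [y yw exy]]]; exists x, y.
Qed.

Lemma lt_absz_floorS (R : archiRealDomainType) (x : R) :
  (0 <= x -> x < `|Num.floor x|.+1%:R)%R.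
Proof.
move=> x_ge0; rewrite -addn1 natrD natr_absz ger0_norm ?floor_ge0 //.
by rewrite -[1%R]/(1%:~R)%R -intrD floorD1_gt.
Qed.

Section NoRemovableVertex.

Variables (T : finType) (e e' : rel T) (S : {set T}) (d : nat).
Hypotheses (e_sym : symmetric e) (e_irr : irreflexive e).
Hypothesis e'_sub : subgraph e S e'.
Hypothesis no_removable : forall v, ~~ removable d S e' v.

Local Notation deg := (deg_in S e').

Definition high := [set x in S | d < deg x].
Definition low := [set x in S | deg x <= d].
Definition high_nbrs v := [set w in high | e' v w].
(* Only meaningful for a low [v], which has a high neighbour. *)
Definition anchor v := odflt v [pick w in high_nbrs v].
Definition star x := x |: [set v in low | anchor v == x].
Definition cross x y := [set v in low | [&& anchor v == x, e' v y & y != x]].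

Lemma e'_sym : symmetric e'.
Proof. by case: e'_sub. Qed.

Lemma e'_e x y : e' x y -> e x y.
Proof. by case: e'_sub => _ /[apply] /and3P []. Qed.

Lemma e'_irr : irreflexive e'.
Proof. by move=> x; apply/negbTE/negP => /e'_e; rewrite e_irr. Qed.

Lemma high_notin_low x : x \in high -> x \notin low.
Proof. by rewrite !inE ltnNge => /andP [_ /negbTE ->]; rewrite andbF. Qed.

Lemma card_high_nbrs_gt1 v : v \in low -> 1 < #|high_nbrs v|.
Proof.
rewrite inE => /andP [vS vd]; apply: contraNT (no_removable v); rewrite -leqNgt.
suff -> : high_nbrs v = [set w in S | e' v w && (d < deg w)] by rewrite /removable vS vd.
by apply/setP => w; rewrite !inE andbAC andbA.
Qed.

Lemma anchor_high_nbrs v : v \in low -> anchor v \in high_nbrs v.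
Proof.
move=> /card_high_nbrs_gt1 /ltnW /card_gt0P [w wN].
by rewrite /anchor; case: pickP => [//|/(_ w)]; rewrite wN.
Qed.

Lemma anchor_high v : v \in low -> anchor v \in high.
Proof. by move/anchor_high_nbrs; rewrite inE => /andP []. Qed.

Lemma e'_anchor v : v \in low -> e' v (anchor v).
Proof. by move/anchor_high_nbrs; rewrite inE => /andP []. Qed.

Lemma high_nonempty : S != set0 -> 0 < #|high|.
Proof.
case/set0Pn=> v vS; apply/card_gt0P.
have [vH|] := boolP (v \in high); first by exists v.
rewrite inE vS -leqNgt => vd; exists (anchor v); apply: anchor_high.
by rewrite inE vS.
Qed.

Lemma in_star x z : (z \in star x) = (z == x) || (z \in low) && (anchor z == x).
Proof. by rewrite !inE. Qed.

Lemma star_disjoint x y :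
  x \in high -> y \in high -> x != y -> [disjoint star x & star y].
Proof.
move=> xH yH xy; rewrite -setI_eq0; apply/eqP/setP => z.
rewrite inE in_set0 !in_star; apply/negbTE/negP => /andP [].
case/orP=> [/eqP zx | /andP [zL /eqP zx]] /orP [/eqP zy | /andP [zL' /eqP zy]].
- by move: xy; rewrite -zx -zy eqxx.
- by move: zL'; rewrite zx (negbTE (high_notin_low xH)).
- by move: zL; rewrite zy (negbTE (high_notin_low yH)).
- by move: xy; rewrite -zx -zy eqxx.
Qed.

Lemma star_radius x : radius_le e (star x) x 1.
Proof.
rewrite /radius_le in_star eqxx; apply/forall_inP => y; rewrite in_star /=.
case/orP=> [/eqP -> | /andP [yL /eqP yx]]; first by rewrite eqxx.
apply/orP; right.
apply/exists_inP; exists y; rewrite ?in_star ?yL ?yx ?eqxx ?orbT //.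
by rewrite andbT e_sym -yx e'_e ?e'_anchor.
Qed.

Lemma deg_split x :
  deg x = \sum_(w in high) (e' x w : nat) + \sum_(w in low) (e' x w : nat).
Proof.
rewrite /deg_in card_set_in_sum (bigID (fun w => d < deg w)) /=.
by congr (_ + _); apply: eq_bigl => w; rewrite !inE -?leqNgt.
Qed.

Lemma sum_deg_high :
  \sum_(x in high) deg x =
  \sum_(x in high) \sum_(y in high) (e' x y : nat) + \sum_(v in low) #|high_nbrs v|.
Proof.
under eq_bigr do rewrite deg_split.
rewrite big_split /=; congr (_ + _); rewrite exchange_big; apply: eq_bigr => v _.
by rewrite card_set_in_sum; apply: eq_bigr => x _; rewrite e'_sym.
Qed.

Lemma card_high_nbrs_le v :
  v \in low -> #|high_nbrs v| <= 2 * #|high_nbrs v :\ anchor v|.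
Proof.
move=> vL; have := card_high_nbrs_gt1 vL.
rewrite (cardsD1 (anchor v)) anchor_high_nbrs //; lia.
Qed.

Lemma in_cross x y v :
  (v \in cross x y) = (v \in low) && [&& anchor v == x, e' v y & y != x].
Proof. by rewrite !inE. Qed.

Lemma sum_low_cross :
  \sum_(v in low) #|high_nbrs v :\ anchor v| =
  \sum_(x in high) \sum_(y in high) #|cross x y|.
Proof.
under [RHS]eq_bigr do under eq_bigr do rewrite card_set_in_sum.
under [RHS]eq_bigr do rewrite exchange_big.
rewrite [RHS]exchange_big; apply: eq_bigr => v vL.
rewrite (bigD1 (anchor v)) ?anchor_high //= [X in _ + X]big1 ?addn0; last first.
  by move=> x /andP [_ /negbTE xv]; apply: big1 => y _; rewrite eq_sym xv.
have -> : high_nbrs v :\ anchor v = [set y in high | e' v y && (y != anchor v)].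
  by apply/setP => y; rewrite !inE andbC andbA.
by rewrite card_set_in_sum; apply: eq_bigr => y _; rewrite eqxx.
Qed.

Lemma cross_star x y v : v \in cross x y -> v \in star x /\ e v y.
Proof.
rewrite in_cross => /andP [vL /and3P [vx evy _]].
by rewrite in_star vL vx orbT e'_e.
Qed.

Lemma cross_common_nbr x y v : v \in cross x y -> e x v && e y v.
Proof.
rewrite in_cross => /andP [vL /and3P [/eqP <- evy _]].
by rewrite !(e_sym _ v) !e'_e ?e'_anchor.
Qed.

Lemma card_cross_pair_lt (s : nat) x y : K2s_free s e -> x != y ->
  #|cross x y| + #|cross y x| < s.
Proof.
move=> K2 xy; have disj : [disjoint cross x y & cross y x].
  rewrite -setI_eq0; apply/eqP/setP => v; rewrite inE in_set0 !in_cross.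
  apply/negbTE/negP => /andP [/andP [_ /and3P [/eqP -> _ _]]].
  by move=> /andP [_ /and3P [/eqP yx _ _]]; rewrite yx eqxx in xy.
have common : cross x y :|: cross y x \subset [set v | e x v && e y v].
  apply/subsetP => v; rewrite inE in_setU => /orP [] /cross_common_nbr //.
  by rewrite andbC.
rewrite -cardsUI (disjoint_setI0 disj) cards0 addn0.
exact: leq_ltn_trans (subset_leq_card common) (card_common_nbrs_lt e_irr K2 xy).
Qed.

Lemma cross_pair_le (s : nat) x y : K2s_free s e ->
  (e' x y : nat) + (#|cross x y| + #|cross y x|) <= s * contraction e star x y.
Proof.
move=> K2; have [<-|xy] := eqVneq x y.
  have -> : cross x x = set0 by apply/setP => v; rewrite in_cross eqxx !andbF inE.
  by rewrite e'_irr cards0.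
have center_star z : z \in star z by rewrite in_star eqxx.
case contr_xy: (contraction e star x y); last first.
  have -> : e' x y = false.
    by apply: (contraFF _ contr_xy) => /e'_e; apply: contraction_edge.
  have -> : cross x y = set0.
    apply/setP => v; rewrite in_set0; apply: (contraFF _ contr_xy) => /cross_star [vx].
    exact: contraction_edge.
  have -> : cross y x = set0.
    apply/setP => v; rewrite in_set0; apply: (contraFF _ contr_xy) => /cross_star [vy].
    by rewrite e_sym; apply: contraction_edge.
  by rewrite cards0.
have := card_cross_pair_lt K2 xy; have := leq_b1 (e' x y); rewrite muln1; lia.
Qed.

Lemma card_high_mul_le (s : nat) : K2s_free s e ->
  #|high| * d.+1 <= s * \sum_(x in high) \sum_(y in high) contraction e star x y.
Proof.
move=> K2; apply: (@leq_trans (\sum_(x in high) deg x)).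
  by rewrite -sum_nat_const; apply: leq_sum => x; rewrite inE => /andP [].
rewrite sum_deg_high; apply: (@leq_trans
  (\sum_(x in high) \sum_(y in high) (e' x y : nat) +
   2 * \sum_(v in low) #|high_nbrs v :\ anchor v|)).
  by rewrite leq_add2l big_distrr; apply: leq_sum => v; apply: card_high_nbrs_le.
rewrite sum_low_cross mul2n -addnn [X in _ + (_ + X) <= _]exchange_big.
rewrite -!big_split big_distrr /=.
apply: leq_sum => x _; rewrite -!big_split big_distrr /=.
by apply: leq_sum => y _; apply: cross_pair_le.
Qed.

Lemma dense_shallow_minor (s : nat) : K2s_free s e -> S != set0 ->
  exists (TH : finType) (eH : rel TH),
    [/\ shallow_minor 1 e eH, 0 < #|TH| & #|TH| * d.+1 <= s * (2 * nedges eH)].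
Proof.
move=> K2 S_ne; pose TH : finType := {x | x \in high}.
pose eH := contraction e (fun u : TH => star (val u)).
have minor : shallow_minor 1 e eH.
  apply: contraction_shallow_minor => // [u w uw|u]; last first.
    by exists (val u); apply: star_radius.
  by apply: star_disjoint; rewrite ?(valP u) ?(valP w) ?val_eqE.
have card_TH : #|TH| = #|high| by rewrite card_sig; apply: eq_card.
exists TH, eH; split; rewrite ?card_TH ?high_nonempty //.
apply: (leq_trans (card_high_mul_le K2)); rewrite leq_mul2l; apply/orP; right.
apply: leq_trans (sum_adj_le_nedges minor.1).
rewrite big_sub; apply: eq_leq; apply: eq_bigr => u _; rewrite big_sub.
by apply: eq_bigr => w _; rewrite /eH /contraction val_eqE.
Qed.

End NoRemovableVertex.

Theorem proposition3p2 (s : nat) (T : finType) (e : rel T) (q : rat) :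
  (2 <= s)%N -> simple_graph e -> K2s_free s e -> is_nabla 1 e q ->
  strongly_degenerate `|Num.floor ((2 * s)%:R * q)%R|%N e.
Proof.
move=> _ [e_sym e_irr] K2 [_ nabla_max] S e' e'_sub S_ne.
set d := `|Num.floor _|%N.
case: (boolP [exists v, removable d S e' v]) => [/existsP // | /existsPn no_rem].
have [TH [eH [minor TH_gt0 dense]]] := dense_shallow_minor e_sym e_irr e'_sub no_rem K2 S_ne.
have := nabla_max TH eH minor TH_gt0.
rewrite /nverts ler_pdivrMr ?ltr0n // => sparse.
move: dense; rewrite -(ler_nat rat) !natrM => dense.
have := lt_absz_floorS (x := ((2 * s)%:R * q)%R); rewrite -/d natrM => floor_gt.
have TH_pos : (0 < #|TH|%:R :> rat)%R by rewrite ltr0n.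
have sparse_s : (s%:R * (2 * (nedges eH)%:R) <= s%:R * (2 * (q * #|TH|%:R)) :> rat)%R.
  by rewrite ler_wpM2l ?ler0n // ler_wpM2l.
have dS_le : (d.+1%:R <= 2%:R * s%:R * q :> rat)%R.
  rewrite -(ler_pM2l TH_pos); lra.
by have := floor_gt (le_trans (ler0n _ _) dS_le); rewrite ltNge dS_le.
Qed.
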